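(* Let $Q$ be a graph consisting of a single vertex $v$ and a single loop edge, and let $X$ be a locally standard $T^m$-pseudomanifold over $Q$ (i.e. with $l=0$, $n=1$ and orbit space $Q$, the vertex being the $0$-stratum and the open loop the $1$-stratum), with orbit projection $\pi:X\to Q$. Then there exists a continuous section $s:Q\to X$ of $\pi$, i.e. $\pi\circ s=\mathrm{id}_Q$.
   Context: Notation: $U(1)=\{z\in\mathbb C:|z|=1\}$, $T^m=U(1)^m$, $\mathbb C^\times=\mathbb C\setminus\{0\}$, open cone $\mathring c(L)=L\times[0,1)/(L\times\{0\})$ ($\mathring c(\emptyset)$ a point). A topological stratified pseudomanifold is a Hausdorff space $Q$ with closed filtration $Q=Q_{l+n}\supsetneq\cdots\supsetneq Q_l\supsetneq\emptyset$ whose strata (components of $Q_i\setminus Q_{i-1}$) are $i$-manifolds, with $\mathring Q=Q_{l+n}\setminus Q_{l+n-1}$ dense, and each point $p$ of an $(l+i)$-stratum having a filtration-preserving neighborhood $O\times\mathring c(L_p)$, $O\subset\mathbb R^{l+i}$ contractible open, $L_p$ a compact $(n-i-1)$-dimensional topological stratified pseudomanifold (the link). Locally standard $T^m$-pseudomanifold $X$ (dimension $l+m+n$, $l\ge0$, $m\ge n\ge0$): a second-countable compact Hausdorff space with effective continuous $T^m$-action with subtorus isotropy groups, filtered by $X_{l+2i+(m-n)}=X_{l+2i+1+(m-n)}=\{x:\dim T^mx\le i+m-n\}$ ($0\le i\le n$), which is a topological stratified pseudomanifold with no orbits of dimension $<m-n$ and with free orbits if $l+n\ne0$, and inductively: if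 $l+n=0$, $X$ is a finite disjoint union of copies of $T^m$; otherwise each $x\in X_{l+2i+(m-n)}\setminus X_{l+2(i-1)+(m-n)}$ has an invariant open neighborhood weakly equivariantly homeomorphic to $O\times(\Omega\times U(1)^{m-n})\times\mathring c(L_x)$ with $O\subset\mathbb R^l$ contractible open, $\Omega\subset(\mathbb C^\times)^i$ invariant open, $L_x$ a compact $(2n-2i-1)$-dimensional locally standard $T_x$-pseudomanifold ($T_x\cong T^{n-i}$ the isotropy group), $T^m\cong U(1)^{i+m-n}\times T_x$ acting freely on the middle factor and via $L_x$ on the cone. The orbit space $Q=X/T^m$ with filtration $Q_{l+i}=X_{l+2i+(m-n)}/T^m$ is a topological stratified pseudomanifold of dimension $l+n$. When $l=0,n=1$, $Q$ is a finite graph (vertices $=$ $0$-strata, open edges $=$ $1$-strata), and $X$ is called a locally standard $T^m$-pseudomanifold over a graph; isotropy is a $1$-dimensional subtorus over vertices and trivial over open edges. *)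

From HB Require Import structures.
From mathcomp Require Import all_boot all_order all_algebra.
From mathcomp Require Import all_classical all_reals.
From mathcomp Require Import topology.
From mathcomp Require Import Rstruct Rstruct_topology.
Set Implicit Arguments. Unset Strict Implicit. Unset Printing Implicit Defensive.
Import Order.TTheory GRing.Theory Num.Theory.
Local Open Scope classical_set_scope.
Local Open Scope ring_scope.

(** Complex numbers, modelled as pairs of (Stdlib) reals with the product
    topology (= the usual topology of C = R^2). *)
Definition C : topologicalType := (Rdefinitions.R * Rdefinitions.R)%type.
Definition cmul (a b : C) : C := (a.1 * b.1 - a.2 * b.2, a.1 * b.2 + a.2 * b.1).
Definition cone : C := (1, 0).
Definition czero : C := (0, 0).
Definition cnorm2 (z : C) : Rdefinitions.R := z.1 ^+ 2 + z.2 ^+ 2.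
Definition U1 : set C := [set z | cnorm2 z = 1].

(** T^m = U(1)^m, realised as the set of row vectors in C^m with all
    coordinates in U(1); group law is coordinatewise multiplication. *)
Definition torus (m : nat) : set 'rV[C]_m := [set t | forall i, U1 (t ord0 i)].
Arguments torus m : clear implicits.
Definition tmul (m : nat) (s t : 'rV[C]_m) : 'rV[C]_m :=
  \row_i cmul (s ord0 i) (t ord0 i).
Definition tone (m : nat) : 'rV[C]_m := \row_i cone.

Arguments tone m : clear implicits.

Definition homeo_on (X Y : topologicalType) (A : set X) (B : set Y) (f : X -> Y) :=
  {within A, continuous f} /\
  exists g : Y -> X, {within B, continuous g} /\
    (forall a, A a -> B (f a) /\ g (f a) = a) /\
    (forall b, B b -> A (g b) /\ f (g b) = b).

Definition torus_aut (m : nat) (rho : 'rV[C]_m -> 'rV[C]_m) :=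
  homeo_on (torus m) (torus m) rho /\
  forall s t, torus m s -> torus m t -> rho (tmul s t) = tmul (rho s) (rho t).

Definition torus_action (m : nat) (X : topologicalType) (act : 'rV[C]_m -> X -> X) :=
  (forall x, act (tone m) x = x) /\
  (forall s t x, torus m s -> torus m t -> act (tmul s t) x = act s (act t x)) /\
  {within torus m `*` [set: X], continuous (fun p => act p.1 p.2)}.

Definition effective_action (m : nat) (X : Type) (act : 'rV[C]_m -> X -> X) :=
  forall t, torus m t -> (forall x, act t x = x) -> t = tone m.

Definition stab (m : nat) (X : Type) (act : 'rV[C]_m -> X -> X) (x : X) : set 'rV[C]_m :=
  [set t | torus m t /\ act t x = x].

Definition tinv (m : nat) (t : 'rV[C]_m) : 'rV[C]_m := \row_i ((t ord0 i).1, - (t ord0 i).2).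
Definition subtorus (m : nat) (S : set 'rV[C]_m) :=
  S `<=` torus m /\ S (tone m) /\
  (forall s t, S s -> S t -> S (tmul s t)) /\ (forall t, S t -> S (tinv t)) /\
  closed S /\ connected S.

Definition free_pt (m : nat) (X : Type) (act : 'rV[C]_m -> X -> X) (x : X) :=
  forall t, torus m t -> act t x = x -> t = tone m.

Definition invariant (m : nat) (X : Type) (act : 'rV[C]_m -> X -> X) (U : set X) :=
  forall t y, torus m t -> U y -> U (act t y).

(** Local model at a free point (i = 1):  Ω × U(1)^(m-1) with Ω ⊆ C^× open
    and U(1)-invariant.  The factor Ω is put at coordinate j of C^m. *)
Definition free_model (m : nat) (j : 'I_m) (Om : set C) : set 'rV[C]_m :=
  [set u | Om (u ord0 j) /\ forall i, i != j -> U1 (u ord0 i)].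

(** Local model at a point of the 0-stratum (i = 0):
    U(1)^(m-1) × c°(L), L = k copies of U(1) (the only compact 1-dimensional
    locally standard T^1-pseudomanifolds).  The open cone over k circles is
    realised as the wedge of k open unit discs in C^k glued at their centres
    (the coordinate discs), with U(1) acting by scalar multiplication.
    The U(1)^(m-1) factor occupies the coordinates i <> j of C^m (coordinate
    j is the dummy value 1); the T_x = U(1) factor acts through coordinate j. *)
Definition vertex_model (m k : nat) (j : 'I_m) : set ('rV[C]_m * 'rV[C]_k)%type :=
  [set p : ('rV[C]_m * 'rV[C]_k)%type | p.1 ord0 j = cone /\ (forall i, i != j -> U1 (p.1 ord0 i)) /\
           (forall a, cnorm2 (p.2 ord0 a) < 1) /\
           (forall a b, a != b -> p.2 ord0 a = czero \/ p.2 ord0 b = czero)].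

Arguments vertex_model m k j : clear implicits.

Definition vertex_act (m k : nat) (j : 'I_m) (t : 'rV[C]_m)
    (p : ('rV[C]_m * 'rV[C]_k)%type) : ('rV[C]_m * 'rV[C]_k)%type :=
  (\row_i (if i == j then p.1 ord0 i else cmul (t ord0 i) (p.1 ord0 i)),
   \row_a cmul (t ord0 j) (p.2 ord0 a)).

(** Locally standard T^m-pseudomanifold with l = 0, n = 1 (i.e. over a graph),
    the inductive definition being unfolded for this case. *)
Definition locally_standard_over_graph (m : nat) (X : topologicalType)
    (act : 'rV[C]_m -> X -> X) :=
  (0 < m)%N /\
  @second_countable X /\ compact [set: X] /\ hausdorff_space X /\
  torus_action act /\ effective_action act /\
  (forall x, subtorus (stab act x)) /\
  dense [set x | free_pt act x] /\
  (forall x, free_pt act x ->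
     exists (U : set X) (Om : set C) (j : 'I_m) (rho : 'rV[C]_m -> 'rV[C]_m)
            (phi : X -> 'rV[C]_m),
       [/\ open U /\ U x /\ invariant act U,
           open Om /\ ~ Om czero /\ (forall z w, U1 z -> Om w -> Om (cmul z w)),
           torus_aut rho,
           homeo_on U (free_model j Om) phi &
           forall t y, torus m t -> U y -> phi (act t y) = tmul (rho t) (phi y)]) /\
  (* local standardness at points with orbit of dimension m-1 *)
  (forall x, ~ free_pt act x ->
     exists (U : set X) (k : nat) (j : 'I_m) (rho : 'rV[C]_m -> 'rV[C]_m)
            (phi : X -> ('rV[C]_m * 'rV[C]_k)%type),
       [/\ open U /\ U x /\ invariant act U, (0 < k)%N,
           torus_aut rho,
           homeo_on U (vertex_model m k j) phi &
           forall t y, torus m t -> U y -> phi (act t y) = vertex_act j (rho t) (phi y)]).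

Definition orbit_projection (m : nat) (X Q : topologicalType)
    (act : 'rV[C]_m -> X -> X) (pi : X -> Q) :=
  (forall q, exists x, pi x = q) /\
  (forall V : set Q, open V <-> open (pi @^-1` V)) /\
  (forall x y, pi x = pi y <-> exists t, torus m t /\ y = act t x).

(** Q is the graph with a single vertex v and a single loop edge: Q is
    homeomorphic to a circle, and its 0-stratum (the image of the non-free
    orbits) is the single point v. *)
Definition loop_graph_orbit_space (m : nat) (X Q : topologicalType)
    (act : 'rV[C]_m -> X -> X) (pi : X -> Q) :=
  (exists h : Q -> C, homeo_on [set: Q] U1 h) /\
  exists v : Q, forall x, ~ free_pt act x <-> pi x = v.

From Pilot Require Import Defs.
From HB Require Import structures.
From mathcomp Require Import all_boot all_order all_algebra.
From mathcomp Require Import all_classical all_reals.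
From mathcomp Require Import topology normedtype realfun trigo.
From mathcomp Require Import Rstruct Rstruct_topology.
From mathcomp Require Import ring lra.
Set Implicit Arguments. Unset Strict Implicit. Unset Printing Implicit Defensive.
Import Order.TTheory GRing.Theory Num.Theory.
Local Open Scope classical_set_scope.
Local Open Scope ring_scope.

(* Every chart of a locally standard pseudomanifold, free or conical, carries
   a continuous slice meeting each orbit exactly once (rotate the coordinates
   onto the nonnegative reals), and the orbit map is open; hence the orbit
   projection pi has local sections and paths in Q lift to X.  Parametrize the
   circle Q by a loop on a compact interval, lift it, and close the lift up by
   dragging its end point back to its starting point along a path in the
   connected torus.  A continuous surjection from a compact interval onto the
   Hausdorff space Q is a quotient map, so the closed lift descends to a
   continuous section of pi. *)

Local Notation R := Rdefinitions.R.

Definition cconj (z : C) : C := (z.1, - z.2).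

Definition cabs (z : C) : C := (Num.sqrt (cnorm2 z), 0).

Lemma cnorm2_mul a b : cnorm2 (cmul a b) = cnorm2 a * cnorm2 b.
Proof. by rewrite /cnorm2 /cmul /=; ring. Qed.

Lemma U1_cone : U1 cone.
Proof. by rewrite /U1 /cnorm2 /= expr1n expr0n addr0. Qed.

Lemma U1_cconj z : U1 z -> U1 (cconj z).
Proof. by rewrite /U1 /cnorm2 /= sqrrN. Qed.

Lemma cmul_cconj z : cmul (cconj z) z = (cnorm2 z, 0).
Proof. by rewrite /cmul /cconj /cnorm2 /=; congr (_, _); ring. Qed.

Lemma cmul_cconjU1 z : U1 z -> cmul (cconj z) z = cone.
Proof. by move=> Uz; rewrite cmul_cconj Uz. Qed.

Lemma cmulA a b c : cmul a (cmul b c) = cmul (cmul a b) c.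
Proof. by rewrite /cmul /=; congr (_, _); ring. Qed.

Lemma cmulr0 a : cmul a czero = czero.
Proof. by rewrite /cmul /czero /=; congr (_, _); ring. Qed.

Lemma cabs0 : cabs czero = czero.
Proof. by rewrite /cabs /cnorm2 /czero /= expr0n addr0 sqrtr0. Qed.

Lemma cabs_mulU1 w z : U1 w -> cabs (cmul w z) = cabs z.
Proof. by move=> Uw; rewrite /cabs cnorm2_mul Uw mul1r. Qed.

Lemma cnorm2_ge0 z : 0 <= cnorm2 z.
Proof. by rewrite /cnorm2 addr_ge0 // sqr_ge0. Qed.

Lemma cnorm2_eq0 z : (cnorm2 z == 0) = (z == czero).
Proof.
case: z => x y; rewrite /cnorm2 /czero /= paddr_eq0 ?sqr_ge0 // !sqrf_eq0.
by rewrite xpair_eqE.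
Qed.

(* For z <> 0 the phase is conj z / |z|. *)
Lemma phase_exists z : exists2 w, U1 w & cmul w z = cabs z.
Proof.
have [->|z0] := eqVneq z czero; first by exists cone; [exact: U1_cone | rewrite cmulr0 cabs0].
set r := Num.sqrt (cnorm2 z).
have n0 : 0 < cnorm2 z by rewrite lt_neqAle eq_sym cnorm2_eq0 z0 cnorm2_ge0.
have rr : r * r = cnorm2 z by rewrite -expr2 sqr_sqrtr // ltW.
have r0 : r != 0 by rewrite sqrtr_eq0 -ltNge.
exists (cmul (r^-1, 0) (cconj z)).
  have cz : cnorm2 (cconj z) = r * r by rewrite rr /cnorm2 /= sqrrN.
  by rewrite /U1 /= cnorm2_mul cz /cnorm2 /= expr0n addr0; field.
by rewrite -cmulA cmul_cconj /cmul /cabs /= -/r -rr; congr (_, _); field.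
Qed.

Lemma C_hausdorff : hausdorff_space C.
Proof. exact: (@norm_hausdorff R (R^o * R^o)%type). Qed.

Lemma continuous_cnorm2 : continuous cnorm2.
Proof.
have sq : continuous (fun x : R => x ^+ 2) := @exprn_continuous R 2.
move=> z; apply: (@cvgD _ R^o).
  by apply: (@continuous_comp _ _ _ fst (fun x : R => x ^+ 2)); [apply: cvg_fst | exact: sq].
by apply: (@continuous_comp _ _ _ snd (fun x : R => x ^+ 2)); [apply: cvg_snd | exact: sq].
Qed.

Lemma continuous_cabs : continuous cabs.
Proof.
move=> z; rewrite /continuous_at /cabs.
have h1 : {for z, continuous (fun y => Num.sqrt (cnorm2 y))}.
  by apply: continuous_comp; [exact: continuous_cnorm2 | exact: sqrt_continuous].
exact: (cvg_pair h1 (cvg_cst (0 : R))).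
Qed.

Definition cexpi (x : R) : C := (cos x, sin x).

Lemma U1_cexpi x : U1 (cexpi x).
Proof. exact: cos2Dsin2. Qed.

Lemma cexpi0 : cexpi 0 = cone.
Proof. by rewrite /cexpi cos0 sin0. Qed.

Lemma continuous_cexpi : continuous cexpi.
Proof.
move=> x; rewrite /continuous_at /cexpi.
exact: (cvg_pair (@continuous_cos R x) (@continuous_sin R x)).
Qed.

Lemma cexpi_surj z : U1 z -> exists2 x, - pi <= x <= pi & cexpi x = z.
Proof.
case: z => a b; rewrite /U1 /cnorm2 /= => ab1.
have a1 : -1 <= a <= 1 by apply/andP; split; nra.
have sinE : sin (acos a) = `|b| by rewrite sin_acos // -ab1 addrC addKr sqrtr_sqr.
have acos_pi : 0 <= acos a <= pi by rewrite acos_ge0 ?acos_lepi.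
have [b0|b0] := leP 0 b.
  exists (acos a); first by move: acos_pi; lra.
  by rewrite /cexpi acosK ?in_itv // sinE ger0_norm.
exists (- acos a); first by move: acos_pi; lra.
by rewrite /cexpi cosN sinN acosK ?in_itv // sinE ltr0_norm ?opprK.
Qed.

Lemma acos_cos_norm (x : R) : - pi <= x <= pi -> acos (cos x) = `|x|.
Proof. by move=> xpi; rewrite -cos_norm cosK // in_itv /= normr_ge0 ler_norml. Qed.

Lemma cexpi_inj x y : - pi <= x <= pi -> - pi <= y <= pi -> cexpi x = cexpi y ->
  x = y \/ (x = - pi /\ y = pi) \/ (x = pi /\ y = - pi).
Proof.
move=> xpi ypi [cosE sinE].
have : `|y| == `|x| by rewrite -acos_cos_norm // -cosE acos_cos_norm.
rewrite eqr_norm2 => /orP[/eqP-> | /eqP yx]; first by left.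
have sinx0 : sin x = 0 by move: sinE; rewrite yx sinN; lra.
have [x0|xn0] := eqVneq x 0; first by left; rewrite yx x0 oppr0.
have : ~ `|x| < pi.
  move=> xlt; have : 0 < sin `|x| by apply: sin_gt0_pi; rewrite normr_gt0 xn0.
  by have [/ger0_norm->|/ltr0_norm->] := leP 0 x; rewrite ?sinN sinx0 ?oppr0 ltxx.
have [/ger0_norm->|/ltr0_norm->] := leP 0 x; move: xpi => /andP[? ?]; lra.
Qed.

Lemma continuous_comp_within (T S U : topologicalType) (f : T -> S) (g : S -> U)
    (B : set S) y :
  {for y, continuous f} -> (\forall z \near y, B (f z)) ->
  {within B, continuous g} -> {for y, continuous (g \o f)}.
Proof.
move=> cf nB cg; have By : B (f y) by exact: nbhs_singleton nB.
have := cg (f y); rewrite /continuous_at/=.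
change (nbhs (f y : subspace B)) with (nbhs_subspace (A:=B) (f y)).
rewrite -(nbhs_subspace_in By) => cgy W /= /cgy; rewrite /= withinE => -[V nV VW].
apply: (filterS2 _ _ nB (cf _ nV)) => z Bz Vz /=.
by have : (V `&` B) (f z) by []; rewrite -VW => -[].
Qed.

Lemma continuous_if_le (U : topologicalType) (f g : R -> U) (c : R) :
  continuous f -> continuous g -> f c = g c ->
  continuous (fun t => if t <= c then f t else g t).
Proof.
move=> cf cg fg t; have [tc|ct|->] := ltgtP t c.
- rewrite /continuous_at (ltW tc); apply: (@cvg_trans _ (f @ t)); last exact: cf.
  apply: near_eq_cvg; near=> s.
  suff -> : s <= c by [].
  by apply: ltW; near: s; exact: lt_nbhsl.
- rewrite /continuous_at leNgt ct; apply: (@cvg_trans _ (g @ t)); last exact: cg.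
  apply: near_eq_cvg; near=> s.
  suff -> : (s <= c) = false by [].
  by apply/negbTE; rewrite -ltNge; near: s; exact: lt_nbhsr.
- move=> W /=; rewrite lexx => fW.
  have gW : nbhs (g c) W by rewrite -fg.
  move: (cf c W fW) (cg c W gW); rewrite /= /nbhs /= => fcW gcW.
  by apply: filterS (filterI fcW gcW) => s [] /=; case: ifP.
Unshelve. all: end_near.
Qed.

Lemma continuous_mxentry (V : topologicalType) m n (i : 'I_m) (j : 'I_n) :
  continuous (fun A : 'M[V]_(m, n) => A i j).
Proof.
move=> A W hW /=.
exists (fun a b => if (a == i) && (b == j) then W else setT).
  by move=> a b; case: ifP => [/andP[/eqP-> /eqP->]//|_]; exact: filterT.
by move=> N hN; have := hN i j; rewrite !eqxx.
Qed.

Lemma continuous_row (T V : topologicalType) n (F : 'I_n -> T -> V) x :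
  (forall j, {for x, continuous (F j)}) -> {for x, continuous (fun y => \row_j F j y)}.
Proof.
move=> cF W [P hP hPW].
have : \forall y \near x, forall ij : 'I_1 * 'I_n, P ij.1 ij.2 (F ij.2 y).
  apply: filter_forall => -[i j] /=; apply: (cF j).
  by have := hP i j; rewrite mxE.
by apply: filterS => y hy; apply: hPW => i j; rewrite mxE; exact: (hy (i, j)).
Qed.

Lemma hausdorff_inj (T U : topologicalType) (h : T -> U) :
  continuous h -> injective h -> hausdorff_space U -> hausdorff_space T.
Proof.
move=> ch ih hU p q cpq; apply: ih; apply: hU => A B /ch nA /ch nB.
by have [z [Az Bz]] := cpq _ _ nA nB; exists (h z).
Qed.

(* A continuous surjection from a compact set onto a Hausdorff space is a
   closed quotient map, so maps constant on its fibres descend continuously. *)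
Lemma continuous_factor_compact (T Y Z : topologicalType) (K : set T)
    (f : T -> Y) (F : T -> Z) :
  compact K -> hausdorff_space Y -> {within K, continuous f} -> continuous F ->
  f @` K = setT -> (forall a b, K a -> K b -> f a = f b -> F a = F b) ->
  exists2 s : Y -> Z, continuous s & forall t, K t -> s (f t) = F t.
Proof.
move=> cK hY cf cF fK Ffib.
have preim y : exists t, K t /\ f t = y.
  have [t Kt <-] : (f @` K) y by rewrite fK.
  by exists t.
pose sec y := proj1_sig (cid (preim y)).
have [Ksec fsec] : (forall y, K (sec y)) /\ (forall y, f (sec y) = y).
  by split => y; case: (proj2_sig (cid (preim y))).
exists (F \o sec); last by move=> t Kt; apply: Ffib; rewrite ?fsec.
apply/continuous_closedP => W cW.
have -> : (F \o sec) @^-1` W = f @` (K `&` F @^-1` W).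
  apply/seteqP; split => [y Wy|_ [t [Kt Wt] <-]]; first by exists (sec y); rewrite ?fsec.
  by rewrite /= (Ffib (sec (f t)) t) ?fsec.
apply: compact_closed => //; apply: continuous_compact.
  exact: continuous_subspaceW cf.
by apply: compact_closedI => //; move/continuous_closedP : cF; apply.
Qed.

(** * The torus and slices of the local models *)

Lemma torus_tinv m t : torus m t -> torus m (tinv t).
Proof. by move=> tt i; rewrite mxE; exact: U1_cconj. Qed.

Lemma tmul_tinv m t : torus m t -> tmul (tinv t) t = tone m.
Proof. by move=> tt; apply/rowP => i; rewrite !mxE; exact: cmul_cconjU1. Qed.

Lemma torus_path m (c : 'rV[C]_m) (a b : R) : a < b -> torus m c ->
  exists d : R -> 'rV[C]_m,
    [/\ continuous d, forall t, torus m (d t), d a = tone m & d b = c].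
Proof.
move=> ab tc.
have angle i : exists x, cexpi x = c ord0 i.
  by have [x _ <-] := cexpi_surj (tc i); exists x.
pose x i := proj1_sig (cid (angle i)).
pose d t := \row_i cexpi (x i * ((t - a) / (b - a))).
exists d; split.
- move=> t; apply: continuous_row => i.
  apply: continuous_comp; last exact: continuous_cexpi.
  apply: cvgM; first exact: cvg_cst.
  apply: cvgM; last exact: cvg_cst.
  by apply: (@cvgB _ R^o); [exact: cvg_id | exact: cvg_cst].
- by move=> t i; rewrite mxE; exact: U1_cexpi.
- by apply/rowP => i; rewrite !mxE subrr mul0r mulr0 cexpi0.
- apply/rowP => i; rewrite !mxE divff ?mulr1; last by rewrite subr_eq0 gt_eqF.
  exact: (proj2_sig (cid (angle i))).
Qed.

Definition untwist m (j : 'I_m) (w : C) (u : 'rV[C]_m) : 'rV[C]_m :=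
  \row_i if i == j then w else cconj (u ord0 i).

Lemma torus_untwist m (j : 'I_m) w (u : 'rV[C]_m) :
  U1 w -> (forall i, i != j -> U1 (u ord0 i)) -> torus m (untwist j w u).
Proof.
by move=> Uw Uu i; rewrite mxE; case: eqP => [_|/eqP ij]; [|apply/U1_cconj/Uu].
Qed.

Lemma untwistE m (j : 'I_m) w (u : 'rV[C]_m) i : (forall i, i != j -> U1 (u ord0 i)) ->
  cmul (untwist j w u ord0 i) (u ord0 i) = if i == j then cmul w (u ord0 j) else cone.
Proof.
by move=> Uu; rewrite mxE; case: eqP => [->|/eqP ij] //; exact: cmul_cconjU1 (Uu _ ij).
Qed.

Definition free_slice m (j : 'I_m) (u : 'rV[C]_m) : 'rV[C]_m :=
  \row_i if i == j then cabs (u ord0 i) else cone.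

Lemma continuous_free_slice m (j : 'I_m) : continuous (free_slice j).
Proof.
move=> u; apply: continuous_row => i; case: (i == j); last exact: cst_continuous.
by apply: continuous_comp; [exact: continuous_mxentry | exact: continuous_cabs].
Qed.

Lemma free_slice_orbit m (j : 'I_m) Om u : free_model j Om u ->
  exists2 w, torus m w & tmul w u = free_slice j u.
Proof.
move=> [_ Uu]; have [w Uw wu] := phase_exists (u ord0 j).
exists (untwist j w u); first exact: torus_untwist.
by apply/rowP => i; rewrite mxE untwistE // mxE; case: eqP => [->|].
Qed.

Lemma free_slice_tmul m (j : 'I_m) u w :
  torus m w -> free_slice j (tmul w u) = free_slice j u.
Proof.
by move=> tw; apply/rowP => i; rewrite !mxE; case: eqP => // _; rewrite cabs_mulU1.
Qed.

Definition vertex_slice m k (p : 'rV[C]_m * 'rV[C]_k) : 'rV[C]_m * 'rV[C]_k :=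
  (tone m, \row_a cabs (p.2 ord0 a)).

Lemma continuous_vertex_slice m k : continuous (@vertex_slice m k).
Proof.
move=> p; rewrite /continuous_at /vertex_slice.
have cp2 : {for p, continuous (fun p : 'rV[C]_m * 'rV[C]_k => \row_a cabs (p.2 ord0 a))}.
  apply: continuous_row => a; apply: continuous_comp; last exact: continuous_cabs.
  apply: (@continuous_comp _ _ _ snd (fun u : 'rV[C]_k => u ord0 a)).
    exact: cvg_snd.
  exact: continuous_mxentry.
exact: (cvg_pair (cvg_cst (tone m)) cp2).
Qed.

(* The hypothesis is the wedge condition of [vertex_model]: a point of the
   open cone over k circles lies on a single one of the k discs. *)
Lemma common_phase k (v : 'rV[C]_k) :
  (forall a b, a != b -> v ord0 a = czero \/ v ord0 b = czero) ->
  exists2 w, U1 w & forall a, cmul w (v ord0 a) = cabs (v ord0 a).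
Proof.
move=> wedge; have [[a va]|v0] := pselect (exists a, v ord0 a <> czero).
  have [w Uw wva] := phase_exists (v ord0 a); exists w => // b.
  have [->//|ba] := eqVneq b a.
  by case: (wedge a b); rewrite 1?eq_sym // => ->; rewrite cmulr0 cabs0.
exists cone => [|a]; first exact: U1_cone.
have -> : v ord0 a = czero by apply: contrapT => va; apply: v0; exists a.
by rewrite cmulr0 cabs0.
Qed.

Lemma vertex_slice_orbit m k (j : 'I_m) p : vertex_model m k j p ->
  exists2 w, torus m w & vertex_act j w p = vertex_slice p.
Proof.
move=> [p1j [Up1 [_ wedge]]]; have [w Uw wp2] := common_phase wedge.
exists (untwist j w p.1); first exact: torus_untwist.
congr (_, _); apply/rowP => i; rewrite [LHS]mxE [RHS]mxE; last by rewrite mxE eqxx wp2.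
case: eqP => [->//|/eqP ij].
by have := untwistE w i Up1; rewrite (negbTE ij).
Qed.

Lemma vertex_slice_act m k (j : 'I_m) (p : 'rV[C]_m * 'rV[C]_k) w :
  torus m w -> vertex_slice (vertex_act j w p) = vertex_slice p.
Proof. by move=> tw; congr (_, _); apply/rowP => a; rewrite !mxE cabs_mulU1. Qed.

(** * Local sections and path lifting *)

Section OrbitProjection.
Variables (m : nat) (X Q : topologicalType).
Variables (act : 'rV[C]_m -> X -> X) (pi : X -> Q).
Hypotheses (act_action : torus_action act) (pi_orbits : orbit_projection act pi).

Lemma act1 x : act (tone m) x = x.
Proof. by case: act_action. Qed.

Lemma actM s t x : torus m s -> torus m t -> act (tmul s t) x = act s (act t x).
Proof. by case: act_action => _ [actM _]; exact: actM. Qed.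

Lemma act_tinv c x : torus m c -> act (tinv c) (act c x) = x.
Proof.
move=> tc; rewrite -actM ?tmul_tinv ?act1 //; exact: torus_tinv.
Qed.

Lemma continuous_act (T : topologicalType) (d : T -> 'rV[C]_m) (F : T -> X) y :
  {for y, continuous d} -> {for y, continuous F} -> (\forall z \near y, torus m (d z)) ->
  {for y, continuous (fun z => act (d z) (F z))}.
Proof.
move=> cd cF td.
apply: (@continuous_comp_within _ _ _ (fun z => (d z, F z)) (fun p => act p.1 p.2)
  (torus m `*` setT)); first exact: (cvg_pair cd cF).
- by apply: filterS td.
- by case: act_action => _ [].
Qed.

Lemma pi_act t x : torus m t -> pi (act t x) = pi x.
Proof. by case: pi_orbits => _ [_ orbitE] tt; apply/esym/orbitE; exists t. Qed.

Lemma pi_eq_orbit x y : pi x = pi y -> exists2 t, torus m t & y = act t x.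
Proof. by case: pi_orbits => _ [_ orbitE] /orbitE [t []]; exists t. Qed.

Lemma preimage_image_invariant (A : set X) : Defs.invariant act A -> pi @^-1` (pi @` A) = A.
Proof.
move=> iA; apply/seteqP; split => [z [y Ay /pi_eq_orbit [t tt ->]]|z Az].
  exact: iA.
by exists z.
Qed.

Lemma open_image_invariant (A : set X) : Defs.invariant act A -> open A -> open (pi @` A).
Proof. by move=> iA oA; case: pi_orbits => _ [-> _]; rewrite preimage_image_invariant. Qed.

Definition orbit_rep (q : Q) : X := proj1_sig (cid (pi_orbits.1 q)).

Lemma orbit_repK q : pi (orbit_rep q) = q.
Proof. exact: proj2_sig (cid (pi_orbits.1 q)). Qed.

Definition local_section (V : set Q) (s : Q -> X) :=
  [/\ open V, forall q, V q -> {for q, continuous s} & forall q, V q -> pi (s q) = q].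

(* A continuous retraction of U onto a slice, constant on orbits, descends
   to a section over the open set pi(U) because pi is open. *)
Lemma orbit_invariant_local_section (U : set X) (S : X -> X) :
  open U -> Defs.invariant act U ->
  (forall y, U y -> {for y, continuous S}) ->
  (forall y, U y -> pi (S y) = pi y) ->
  (forall y1 y2, U y1 -> pi y1 = pi y2 -> S y1 = S y2) ->
  local_section (pi @` U) (S \o orbit_rep).
Proof.
move=> oU iU cS piS S_orbit.
have U_rep q : (pi @` U) q -> U (orbit_rep q).
  by move=> Uq; rewrite -(preimage_image_invariant iU) /= orbit_repK.
split; first exact: open_image_invariant.
- move=> q /U_rep Uq W; rewrite nbhsE => -[W' [oW' W'S] W'W].
  pose O := U `&` S @^-1` W'.
  have iO : Defs.invariant act O.
    move=> t z tt [Uz W'z]; split; first exact: iU.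
    by rewrite /= -(S_orbit z) ?pi_act.
  have oO : open O.
    rewrite openE => z [Uz W'z]; apply: filterI; first exact: open_nbhs_nbhs.
    exact/cS/open_nbhs_nbhs.
  have Oq : (pi @` O) q by exists (orbit_rep q); rewrite ?orbit_repK.
  apply: filterS (open_nbhs_nbhs (conj (open_image_invariant iO oO) Oq)).
  move=> _ [y [Uy W'y] <-]; apply: W'W => /=.
  have Urep : U (orbit_rep (pi y)) by apply: U_rep; exists y.
  by rewrite (S_orbit _ y Urep) ?orbit_repK.
- by move=> q /U_rep Uq; rewrite /= piS // orbit_repK.
Qed.

Lemma chart_local_section (M : topologicalType) (U : set X) (B : set M)
    (phi : X -> M) (alpha : 'rV[C]_m -> M -> M) (rho : 'rV[C]_m -> 'rV[C]_m)
    (slice : M -> M) :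
  open U -> Defs.invariant act U -> homeo_on U B phi -> torus_aut rho ->
  (forall t y, torus m t -> U y -> phi (act t y) = alpha (rho t) (phi y)) ->
  continuous slice ->
  (forall p, B p -> exists2 w, torus m w & alpha w p = slice p) ->
  (forall p w, B p -> torus m w -> slice (alpha w p) = slice p) ->
  exists s, local_section (pi @` U) s.
Proof.
move=> oU iU [cphi [phi' [cphi' [phiK _]]]] [[_ [rho' [_ [rhoK rho'K]]]] _]
  phi_act cslice slice_orbit slice_alpha.
have slice_phi y : U y -> exists2 t, torus m t & phi (act t y) = slice (phi y).
  move=> Uy; have [w tw <-] := slice_orbit _ (phiK _ Uy).1.
  by have [tw' rhow] := rho'K _ tw; exists (rho' w); rewrite // phi_act // rhow.
pose S y := phi' (slice (phi y)).
have S_orbit y : U y -> exists2 t, torus m t & S y = act t y.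
  move=> Uy; have [t tt phit] := slice_phi y Uy.
  by exists t; rewrite // /S -phit (phiK _ (iU _ _ tt Uy)).2.
exists (S \o orbit_rep); apply: orbit_invariant_local_section => //.
- move=> y Uy; apply: (@continuous_comp_within _ _ _ (slice \o phi) phi' B) => //.
    apply: continuous_comp; last exact: cslice.
    by move: cphi; rewrite continuous_open_subspace // => /(_ y (mem_set Uy)).
  apply: filterS (open_nbhs_nbhs (conj oU Uy)) => z Uz /=.
  by have [t tt <-] := slice_phi z Uz; exact: (phiK _ (iU _ _ tt Uz)).1.
- by move=> y /S_orbit [t tt ->]; rewrite pi_act.
- move=> y1 y2 Uy1 /pi_eq_orbit [t tt ->].
  by rewrite /S phi_act // slice_alpha //; [exact: (phiK _ Uy1).1 | exact: (rhoK _ tt).1].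
Qed.

Hypothesis local_sections : forall q, exists V s, V q /\ local_section V s.

Lemma path_lift_extend (g : R -> Q) (sg : R -> X) (V : set Q) (s : Q -> X) (a u v : R) :
  continuous g -> continuous sg -> a <= u -> u <= v ->
  (forall t, a <= t <= u -> pi (sg t) = g t) ->
  local_section V s -> (forall t, u <= t <= v -> V (g t)) ->
  exists sg' : R -> X,
    [/\ continuous sg', sg' a = sg a & forall t, a <= t <= v -> pi (sg' t) = g t].
Proof.
move=> cg csg au uv lift_u [_ cs ps] gV.
pose clamp := (fun=> u) \max ((fun=> v) \min id).
have clamp_id t : u <= t <= v -> clamp t = t.
  by case/andP=> ut tv; rewrite /clamp /= min_r // max_r.
have clamp_in t : u <= clamp t <= v.
  by rewrite /clamp /= le_max lexx ge_max uv ge_min lexx.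
have [c tc sgu] : exists2 c, torus m c & sg u = act c (s (g u)).
  by apply: pi_eq_orbit; rewrite ps ?lift_u ?au ?lexx //; apply: gV; rewrite lexx uv.
pose sg2 t := act c (s (g (clamp t))).
exists (fun t => if t <= u then sg t else sg2 t); split.
- apply: continuous_if_le => // [t|]; last by rewrite /sg2 sgu clamp_id // lexx uv.
  apply: (@continuous_act _ (fun=> c)); [exact: cst_continuous | | by near=> z].
  apply: continuous_comp; last exact/cs/gV/clamp_in.
  apply: continuous_comp; last exact: cg.
  apply: continuous_max; first exact: cst_continuous.
  by apply: continuous_min; [exact: cst_continuous | exact: cvg_id].
- by rewrite ifT.
- move=> t /andP[ta tv]; case: ifP => [tu|/negbT]; first by apply: lift_u; rewrite ta tu.
  rewrite -ltNge => ut; have utv : u <= t <= v by rewrite (ltW ut) tv.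
  by rewrite /sg2 pi_act // clamp_id // ps //; exact: gV.
Unshelve. all: end_near.
Qed.

Lemma path_lift (g : R -> Q) (a b : R) (x0 : X) :
  continuous g -> a <= b -> pi x0 = g a ->
  exists sg : R -> X,
    [/\ continuous sg, sg a = x0 & forall t, a <= t <= b -> pi (sg t) = g t].
Proof.
move=> cg ab px0.
pose A := [set u | a <= u <= b /\ exists sg : R -> X,
  [/\ continuous sg, sg a = x0 & forall t, a <= t <= u -> pi (sg t) = g t]].
have Aa : A a.
  split; first by rewrite lexx ab.
  exists (fun=> x0); split => // [|t /andP[ta ta']]; first exact: cst_continuous.
  by have -> : t = a by apply/eqP; rewrite eq_le ta ta'.
have ubA : ubound A b by move=> u [/andP[]].
have supA : has_sup A by split; [exists a | exists b].
set w := sup A.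
have [V [s [Vgw [oV cs ps]]]] := local_sections (g w).
have [e e0 wV] : exists2 e : R, 0 < e & forall t, `|w - t| < e -> V (g t).
  by have /nbhs_ballP[e e0 wV] := cg w _ (open_nbhs_nbhs (conj oV Vgw)); exists e.
have [u [/andP[au ub] [sg [csg sga lift_u]]]] := sup_adherent e0 supA; rewrite -/w => wu.
have uw : u <= w by apply: sup_upper_bound => //; split; [rewrite au | exists sg].
pose v := Num.min b (w + e / 2).
have [uv vwe] : u <= v /\ v <= w + e / 2.
  by rewrite /v le_min ge_min lexx ub orbT; split => //; lra.
have Av : A v.
  split; first by rewrite (le_trans au uv) /v ge_min lexx.
  have gV t : u <= t <= v -> V (g t).
    by case/andP=> ut tv; apply: wV; rewrite ltr_norml; apply/andP; split; lra.
  have [sg' [csg' sg'a lift_v]] := path_lift_extend cg csg au uv lift_u (And3 oV cs ps) gV.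
  by exists sg'; split; rewrite ?sg'a.
have vb : v = b.
  have : v <= w by apply: sup_upper_bound.
  rewrite /v minEle; case: ifP => // /negbT; rewrite -ltNge; lra.
by case: Av; rewrite vb.
Qed.

(* Lift the loop as a path, then drag the end point back to the start along
   a path in the torus; this is where the connectedness of T^m enters. *)
Lemma closed_loop_lift (g : R -> Q) (a b : R) :
  continuous g -> a < b -> g a = g b ->
  exists F : R -> X,
    [/\ continuous F, F a = F b & forall t, a <= t <= b -> pi (F t) = g t].
Proof.
move=> cg ab gab; set x0 := orbit_rep (g a).
have [sg [csg sga lift]] := path_lift cg (ltW ab) (orbit_repK _).
have [c tc sgb] : exists2 c, torus m c & sg b = act c x0.
  by apply: pi_eq_orbit; rewrite orbit_repK lift // ltW ?lexx.
have [d [cd td da db]] := torus_path ab (torus_tinv tc).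
exists (fun t => act (d t) (sg t)); split.
- by move=> t; apply: continuous_act; [exact: cd | exact: csg | near=> z; exact: td].
- by rewrite da act1 sga db sgb act_tinv.
- by move=> t abt; rewrite pi_act // lift.
Unshelve. all: end_near.
Qed.

End OrbitProjection.

(** * Orbit spaces homeomorphic to a circle *)

Lemma locally_standard_local_sections m (X Q : topologicalType)
    (act : 'rV[C]_m -> X -> X) (pi : X -> Q) (pi_orbits : orbit_projection act pi) :
  locally_standard_over_graph act ->
  forall q, exists V s, V q /\ local_section pi V s.
Proof.
case=> _ [_ [_ [_ [_ [_ [_ [_ [free_chart vertex_chart]]]]]]]] q.
have [y <-] := pi_orbits.1 q.
have [fy|nfy] := pselect (free_pt act y).
  have [U [Om [j [rho [phi [[oU [Uy iU]] _ rho_aut phi_homeo phi_act]]]]]] := free_chart y fy.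
  have [s Us] := chart_local_section pi_orbits oU iU phi_homeo rho_aut phi_act
    (@continuous_free_slice m j) (@free_slice_orbit m j Om)
    (fun p w _ => @free_slice_tmul m j p w).
  by exists (pi @` U), s; split => //; exists y.
have [U [k [j [rho [phi [[oU [Uy iU]] _ rho_aut phi_homeo phi_act]]]]]] := vertex_chart y nfy.
have [s Us] := chart_local_section pi_orbits oU iU phi_homeo rho_aut phi_act
  (@continuous_vertex_slice m k) (@vertex_slice_orbit m k j)
  (fun p w _ => @vertex_slice_act m k j p w).
by exists (pi @` U), s; split => //; exists y.
Qed.

Lemma homeo_U1_hausdorff (Q : topologicalType) (h : Q -> C) :
  homeo_on [set: Q] U1 h -> hausdorff_space Q.
Proof.
move=> [ch [hi [_ [hK _]]]]; apply: (hausdorff_inj (h := h)) C_hausdorff.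
  exact/continuous_subspace_setT.
by apply: (can_inj (g := hi)) => q; have [] := hK q I.
Qed.

Lemma homeo_U1_loop (Q : topologicalType) (h : Q -> C) :
  homeo_on [set: Q] U1 h ->
  exists (loop : R -> Q) (a b : R),
    [/\ a < b, continuous loop, loop a = loop b, loop @` `[a, b] = setT &
        forall s t, a <= s <= b -> a <= t <= b -> loop s = loop t ->
          s = t \/ (s = a /\ t = b) \/ (s = b /\ t = a)].
Proof.
move=> [_ [hi [chi [hK hiK]]]].
have hiE q : hi (h q) = q by have [] := hK q I.
exists (hi \o cexpi), (- pi), pi; split.
- by have := @pi_gt0 R; lra.
- move=> t; apply: (continuous_comp_within (B := U1)) => //; first exact: continuous_cexpi.
  by near=> z; exact: U1_cexpi.
- by rewrite /= /cexpi cosN sinN sinpi oppr0.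
- apply/seteqP; split => // q _; have [x xpi ex] := cexpi_surj (hK q I).1.
  by exists x; rewrite /= ?in_itv // ex hiE.
- move=> s t spi tpi /(congr1 h); rewrite /= !(hiK _ (U1_cexpi _)).2.
  exact: cexpi_inj.
Unshelve. all: end_near.
Qed.

Theorem mainTheorem2 (m : nat) (X Q : topologicalType)
    (act : 'rV[C]_m -> X -> X) (pi : X -> Q) :
  locally_standard_over_graph act ->
  orbit_projection act pi ->
  loop_graph_orbit_space act pi ->
  exists s : Q -> X, continuous s /\ (forall q, pi (s q) = q).
Proof.
move=> HX pi_orbits [[h h_homeo] _].
have act_action : torus_action act by case: HX => _ [_ [_ [_ []]]].
have [loop [a [b [ab cloop loop_ab loop_onto loop_fibre]]]] := homeo_U1_loop h_homeo.
have [F [cF Fab liftF]] := closed_loop_lift act_action pi_orbits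
  (locally_standard_local_sections pi_orbits HX) cloop ab loop_ab.
have F_fibre u v : u \in `[a, b] -> v \in `[a, b] -> loop u = loop v -> F u = F v.
  rewrite /= !in_itv /= => au av /(loop_fibre _ _ au av).
  by case=> [->|[[-> ->]|[-> ->]]].
have [s cs sF] := continuous_factor_compact (@segment_compact _ a b)
  (homeo_U1_hausdorff h_homeo) (continuous_subspaceT cloop) cF loop_onto F_fibre.
exists s; split => // q.
have [t abt <-] : (loop @` `[a, b]) q by rewrite loop_onto.
by rewrite sF // liftF.
Qed.
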